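(* In the (heterogeneous) UAV Persistent Service model with parameters $f>0$, $c\ge0$ and displacement times $g_1,\dots,g_N>0$ satisfying $2g_i<f$, every feasible schedule (one keeping all $N$ locations covered at all times $t\ge0$) uses at least $$M_{LB}=N+\left\lceil\sum_{i=1}^N\frac{c+2g_i}{f-2g_i}\right\rceil$$ UAVs.
   Context: UAV Persistent Service model: there is a single recharging station (RS) and a finite set of $N$ aerial locations, served by identical UAVs. A UAV with a full battery can fly for at most $f$ time units; replacing/recharging its battery at the RS takes $c$ time units. Flying between the RS and location $i$ (either direction) takes $g_i$ time units. A UAV's activity consists of sorties: it leaves the RS fully charged, flies to one location, stays there (covering it), and flies back to the RS, with total airborne time of the sortie at most $f$; it then spends $c$ time units recharging at the RS (possibly followed by idle time) before its next sortie. At time $0$ each UAV is fully charged, either at the RS or at a location. A location is covered at time $t$ if some UAV is present at it at time $t$. A schedule is feasible if every location is covered at every time $t\ge0$. *)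

From mathcomp Require Import all_boot all_order all_algebra.
From mathcomp Require Import reals.
Set Implicit Arguments. Unset Strict Implicit. Unset Printing Implicit Defensive.
Import Order.TTheory GRing.Theory Num.Theory.
Local Open Scope ring_scope.

Section UAV.
Variables (R : realType) (N : nat).

(* A sortie: departs the RS at time s_dep, flies to location s_loc
   (arriving at s_dep + g s_loc), stays there until s_leave, then flies
   back (arriving at the RS at s_leave + g s_loc). *)
Record sortie := Sortie { s_loc : 'I_N; s_dep : R; s_leave : R }.

(* The activity of a single UAV.
   p_init = None    : fully charged at the RS at time 0;
   p_init = Some i  : fully charged at location i at time 0, stays there
                      until p_init_leave, then flies back to the RS.
   p_sorties j      : the j-th (subsequent) sortie, None if the UAV performs
                      fewer than j+1 further sorties. *)
Record plan := Plan {
  p_init : option 'I_N;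
  p_init_leave : R;
  p_sorties : nat -> option sortie }.

Variables (f c : R) (g : 'I_N -> R).

Definition s_arrive (s : sortie) : R := s_dep s + g (s_loc s).
Definition s_return (s : sortie) : R := s_leave s + g (s_loc s).

Definition valid_sortie (s : sortie) : Prop :=
  s_arrive s <= s_leave s /\ s_return s - s_dep s <= f.

Definition first_avail (p : plan) : R :=
  match p_init p with
  | None => 0
  | Some i => p_init_leave p + g i + c
  end.

Definition valid_plan (p : plan) : Prop :=
  (forall i, p_init p = Some i ->
     0 <= p_init_leave p /\ p_init_leave p + g i <= f) /\
  (forall j s, p_sorties p j = Some s -> valid_sortie s) /\
  (forall s, p_sorties p 0 = Some s -> first_avail p <= s_dep s) /\
  (forall j s, p_sorties p j.+1 = Some s ->
     exists s', p_sorties p j = Some s' /\ s_return s' + c <= s_dep s).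

Definition present (p : plan) (i : 'I_N) (t : R) : Prop :=
  (p_init p = Some i /\ 0 <= t <= p_init_leave p) \/
  (exists j s, p_sorties p j = Some s /\ s_loc s = i /\
     s_arrive s <= t <= s_leave s).

Definition feasible (M : nat) (sched : 'I_M -> plan) : Prop :=
  (forall k, valid_plan (sched k)) /\
  (forall (i : 'I_N) (t : R), 0 <= t -> exists k : 'I_M, present (sched k) i t).

End UAV.

From mathcomp Require Import all_boot all_order all_algebra.
From mathcomp Require Import reals lra ring.
Set Implicit Arguments. Unset Strict Implicit. Unset Printing Implicit Defensive.
Import Order.TTheory GRing.Theory Num.Theory.
Local Open Scope ring_scope.

(* Give location i the weight w_i = 1 + r_i with r_i = (c + 2 g_i) / (f - 2 g_i).
   A stay of length L <= f - 2 g_i at i occupies its UAV for a cycle of length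
   L + 2 g_i + c (two flights and a recharge), which is at least w_i L.  Over a
   horizon [0, T] every location is covered for a total time T, so the stays
   have weighted length at least T * sum_i w_i; the cycles of one UAV are
   disjoint, so each UAV contributes at most T + K for a constant K.  Hence
   T (N + sum_i r_i) <= M (T + K) for every T, which forces
   N + sum_i r_i <= M, and M is an integer. *)

Lemma interval_cover_le_sum (R : realFieldType) (I : eqType) (a b : I -> R)
    (s : seq I) (x T : R) :
  (forall j, j \in s -> a j <= b j) ->
  (forall t, x <= t <= T -> exists2 j, j \in s & a j <= t <= b j) ->
  T - x <= \sum_(j <- s) (b j - a j).
Proof.
move: {2}(size s) (leqnn (size s)) => n.
elim: n s x => [|n IH] s x size_s ab cover.
  move: size_s; rewrite leqn0 size_eq0 => /eqP s0; subst s; rewrite big_nil.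
  have [Tx|xT] := ltrP T x; first by rewrite subr_le0 ltW.
  have xx : x <= x <= T by rewrite lexx xT.
  by have [j] := cover x xx.
have sum_ge0 s' : {subset s' <= s} -> 0 <= \sum_(j <- s') (b j - a j).
  by move=> sub; rewrite big_seq sumr_ge0 // => j /sub /ab; rewrite subr_ge0.
have [Tx|xT] := ltrP T x.
  by apply: le_trans (sum_ge0 _ (fun j js => js)); rewrite subr_le0 ltW.
have xx : x <= x <= T by rewrite lexx xT.
have [j0 j0s /andP[aj0 j0b]] := cover x xx.
have -> : \sum_(j <- s) (b j - a j) = b j0 - a j0 + \sum_(j <- rem j0 s) (b j - a j).
  by rewrite (perm_big _ (perm_to_rem j0s)) big_cons.
have rest_ge0 := sum_ge0 (rem j0 s) (fun j => @mem_rem _ _ _ _).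
have [Tb|bT] := lerP T (b j0); first lra.
suff: T - b j0 <= \sum_(j <- rem j0 s) (b j - a j) by lra.
apply/ler_addgt0Pr => e e_gt0; rewrite -lerBlDr -addrA -opprD.
apply: IH => [| j /mem_rem /ab // | t /andP[t1 t2]].
  by rewrite size_rem //; case: (s) j0s size_s.
have tt : x <= t <= T by apply/andP; split; lra.
have [j js /andP[ja jb]] := cover t tt.
exists j; last by rewrite ja jb.
by apply: rem_mem => //; apply/eqP => ej; move: jb; rewrite ej; lra.
Qed.

Lemma sum_if_eq_Some (R : pzSemiRingType) (I : finType) (F : I -> R)
    (o : option I) (x : R) :
  \sum_i F i * (if o == Some i then x else 0) = if o is Some i then F i * x else 0.
Proof.
case: o => [i0|]; last by rewrite big1 // => i _ /=; rewrite mulr0.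
rewrite (bigD1 i0) //= eqxx big1 ?addr0 // => i /negbTE ne_i.
by rewrite (inj_eq Some_inj) eq_sym ne_i mulr0.
Qed.

Lemma ex_pos_lbound (R : realDomainType) (I : finType) (a : I -> R) :
  (forall i, 0 < a i) -> exists2 d, 0 < d & forall i, d <= a i.
Proof.
move=> a_gt0; have [i0 _|I0] := pickP (fun _ : I => true); last first.
  by exists 1 => // i; have := I0 i.
have [i _ min_i] := arg_minP a (isT : xpredT i0).
by exists (a i) => // j; apply: min_i.
Qed.

Lemma ler_of_affine_growth (R : realFieldType) (a b K : R) : 0 <= b -> 0 <= K ->
  (forall T, 0 <= T -> a * T <= b * (T + K)) -> a <= b.
Proof.
move=> b_ge0 K_ge0 growth; rewrite leNgt; apply/negP => ba.
have D_gt0 : 0 < a - b by rewrite subr_gt0.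
have bK_ge0 : 0 <= b * K / (a - b) by rewrite divr_ge0 ?mulr_ge0 // ltW.
set T := b * K / (a - b) + 1.
have T_ge0 : 0 <= T by rewrite /T; lra.
have TD : T * (a - b) = b * K + (a - b).
  by rewrite /T mulrDl divfK ?mul1r // gt_eqF.
have expand : a * T - b * (T + K) = T * (a - b) - b * K by ring.
have := growth T T_ge0; clearbody T; lra.
Qed.

Section WeightedCoverage.
Variables (R : realType) (N : nat) (f c : R) (g : 'I_N -> R).
Hypotheses (f_gt0 : 0 < f) (c_ge0 : 0 <= c).
Hypotheses (g_gt0 : forall i, 0 < g i) (g_lt_f : forall i, 2 * g i < f).

Definition overhead i := (c + 2 * g i) / (f - 2 * g i).
Definition weight i := 1 + overhead i.

Lemma overhead_ge0 i : 0 <= overhead i.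
Proof.
move: (g_gt0 i) (g_lt_f i) c_ge0 => g_pos gf c_nneg.
by rewrite /overhead divr_ge0 //; lra.
Qed.

Lemma weight_ge0 i : 0 <= weight i.
Proof. by have := overhead_ge0 i; rewrite /weight; lra. Qed.

Lemma weight_stay_le i L : 0 <= L -> L <= f - 2 * g i -> weight i * L <= L + 2 * g i + c.
Proof.
move=> L_ge0 L_le.
have : overhead i * L <= overhead i * (f - 2 * g i) by rewrite ler_wpM2l ?overhead_ge0.
rewrite {2}/overhead divfK; last by rewrite subr_eq0 gt_eqF.
by rewrite /weight mulrDl mul1r; lra.
Qed.

(* Visit 0 of a plan is its initial stay, visit j.+1 is its j-th sortie;
   sorties departing after the horizon T are discarded. *)
Definition visit_loc (p : plan R N) (T : R) (n : nat) : option 'I_N :=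
  match n with
  | 0 => p_init p
  | j.+1 => if p_sorties p j is Some s then
              (if s_dep s <= T then Some (s_loc s) else None)
            else None
  end.

Definition visit_start (p : plan R N) (n : nat) : R :=
  match n with
  | 0 => 0
  | j.+1 => if p_sorties p j is Some s then s_arrive g s else 0
  end.

Definition visit_end (p : plan R N) (n : nat) : R :=
  match n with
  | 0 => p_init_leave p
  | j.+1 => if p_sorties p j is Some s then s_leave s else 0
  end.

Definition visit_time (p : plan R N) (T : R) (i : 'I_N) (n : nat) : R :=
  if visit_loc p T n == Some i then visit_end p n - visit_start p n else 0.

Definition visit_weight (p : plan R N) (T : R) (n : nat) : R :=
  if visit_loc p T n is Some i then weight i * (visit_end p n - visit_start p n) else 0.

Definition cycle_time (p : plan R N) (T : R) (j : nat) : R :=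
  if p_sorties p j is Some s then
    (if s_dep s <= T then s_return g s + c - s_dep s else 0)
  else 0.

Lemma sum_weight_visit_time p T n :
  \sum_i weight i * visit_time p T i n = visit_weight p T n.
Proof. exact: sum_if_eq_Some. Qed.

Definition service_slack := (\sum_i weight i) * f + f + c.

Lemma service_slack_ge0 : 0 <= service_slack.
Proof.
have := c_ge0; have := f_gt0.
have : 0 <= (\sum_i weight i) * f.
  by rewrite mulr_ge0 ?(ltW f_gt0) // sumr_ge0 // => i _; apply: weight_ge0.
by rewrite /service_slack; lra.
Qed.

Lemma first_avail_bounds p : valid_plan f c g p -> 0 <= first_avail c g p <= f + c.
Proof.
move: f_gt0 c_ge0 => f_pos c_nneg [init_ok _]; rewrite /first_avail.
case E: (p_init p) => [i|]; last lra.
by have [] := init_ok i E; have := g_gt0 i; lra.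
Qed.

(* The cycles [s_dep, s_return + c] of successive sorties are disjoint and all
   lie in [first_avail, T + f + c] when they depart by time T. *)
Lemma cycle_time_sum_le p T : valid_plan f c g p -> 0 <= T -> forall n,
  \sum_(j < n) cycle_time p T j <= T + f + c - first_avail c g p /\
  (forall s, p_sorties p n = Some s ->
     \sum_(j < n) cycle_time p T j <= s_dep s - first_avail c g p).
Proof.
move=> vp T_ge0; have /andP[fa_ge0 fa_le] := first_avail_bounds vp.
case: vp => [_ [sorties_ok [first_ok next_ok]]].
elim => [|n [IH_total IH_next]].
  by rewrite big_ord0; split => [|s /first_ok]; lra.
rewrite big_ord_recr /= /cycle_time.
case E: (p_sorties p n) => [s0|]; last first.
  by rewrite addr0; split => // s /next_ok [s' [E' _]]; rewrite E in E'.
have [] := sorties_ok _ _ E; rewrite /s_arrive /s_return => stay_ok air_ok.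
have dep_ge := IH_next _ E; have g_pos := g_gt0 (s_loc s0); have := c_ge0.
split; first by case: ifP => dep_le; lra.
move=> s /next_ok [s' [E' ret_le]]; move: E' ret_le; rewrite E => -[<-].
by rewrite /s_return; case: ifP => _; lra.
Qed.

Lemma visit_weight_sum_le p T J : valid_plan f c g p -> 0 <= T ->
  \sum_(n < J.+1) visit_weight p T n <= T + service_slack.
Proof.
move=> vp T_ge0; have /andP[fa_ge0 _] := first_avail_bounds vp.
have [total_le _] := cycle_time_sum_le vp T_ge0 J.
have init_le : visit_weight p T 0 <= (\sum_i weight i) * f.
  rewrite /visit_weight /=; case E: (p_init p) => [i|].
    have [leave_ge0 leave_le] := vp.1 i E; have g_pos := g_gt0 i.
    apply: (@le_trans _ _ (weight i * f)).
      by rewrite subr0 ler_wpM2l ?weight_ge0 //; lra.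
    rewrite ler_wpM2r ?(ltW f_gt0) // (bigD1 i) //= lerDl.
    by apply: sumr_ge0 => k _; apply: weight_ge0.
  by rewrite mulr_ge0 ?(ltW f_gt0) // sumr_ge0 // => k _; apply: weight_ge0.
have sorties_le : \sum_(j < J) visit_weight p T (lift ord0 j) <=
                  \sum_(j < J) cycle_time p T j.
  apply: ler_sum => j _; rewrite lift0 /visit_weight /cycle_time /=.
  case E: (p_sorties p j) => [s|] //; case: ifP => // _.
  have [] := vp.2.1 _ _ E; rewrite /s_arrive /s_return => stay_ok air_ok.
  apply: le_trans (weight_stay_le _ _) _; lra.
by rewrite big_ord_recl /service_slack; lra.
Qed.

Lemma sortie_dep_lbound p d : valid_plan f c g p -> (forall i, d <= 2 * g i + c) ->
  forall j s, p_sorties p j = Some s -> j%:R * d <= s_dep s.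
Proof.
move=> vp d_le; have /andP[fa_ge0 _] := first_avail_bounds vp.
case: vp => _ [sorties_ok [first_ok next_ok]].
elim => [|j IH] s E; first by rewrite mul0r (le_trans fa_ge0) ?first_ok.
have [s' [E' ret_le]] := next_ok _ _ E.
have [] := sorties_ok _ _ E'; have := IH _ E'; have := d_le (s_loc s').
rewrite /s_arrive /s_return in ret_le *; rewrite -natr1 mulrDl mul1r; lra.
Qed.

Lemma location_time_le_visits M (sched : 'I_M -> plan R N) (d T : R) (J : nat)
    (i : 'I_N) :
  feasible f c g sched -> 0 < d -> (forall i, d <= 2 * g i + c) ->
  0 <= T -> T < J%:R * d ->
  T <= \sum_(k < M) \sum_(n < J.+1) visit_time (sched k) T i n.
Proof.
move=> [valid cover] d_gt0 d_le T_ge0 TJ.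
pose visits := [pred x : 'I_M * 'I_J.+1 | visit_loc (sched x.1) T x.2 == Some i].
have := @interval_cover_le_sum R _
  (fun x : 'I_M * 'I_J.+1 => visit_start (sched x.1) x.2)
  (fun x : 'I_M * 'I_J.+1 => visit_end (sched x.1) x.2) (enum visits) 0 T.
rewrite subr0 big_enum /= pair_big /= big_mkcond; apply.
  move=> [k [n n_lt]]; rewrite mem_enum inE /=; case: n n_lt => [|j] _ /=.
    by move/eqP/(valid k).1 => [].
  by case E: (p_sorties (sched k) j) => [s|] // _; have [] := (valid k).2.1 _ _ E.
move=> t /andP[t_ge0 tT]; have [k [[E tt]|[j [s [E [loc_s ts]]]]]] := cover i t t_ge0.
  by exists (k, ord0); rewrite ?mem_enum ?inE //= E.
have := sortie_dep_lbound (valid k) d_le E.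
move: ts; rewrite /s_arrive => /andP[ts1 ts2] dep_ge.
have g_pos := g_gt0 (s_loc s).
have jJ : (j < J)%N by rewrite -(ltr_nat R) -(ltr_pM2r d_gt0); lra.
have dep_le : s_dep s <= T by lra.
exists (k, Ordinal (jJ : (j.+1 < J.+1)%N)); rewrite ?mem_enum ?inE /= E.
  by rewrite dep_le loc_s.
by rewrite /s_arrive ts1 ts2.
Qed.

Lemma weighted_cover_le M (sched : 'I_M -> plan R N) T :
  feasible f c g sched -> 0 <= T ->
  (N%:R + \sum_i overhead i) * T <= M%:R * (T + service_slack).
Proof.
move=> feas T_ge0.
have cycle_gt0 i : 0 < 2 * g i + c by have := g_gt0 i; have := c_ge0; lra.
have [d d_gt0 d_le] := ex_pos_lbound cycle_gt0.
pose J := Num.Def.archi_bound (T / d).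
have TJ : T < J%:R * d.
  by rewrite -ltr_pdivrMr // archi_boundP // divr_ge0 // ltW.
have -> : (N%:R + \sum_i overhead i) * T = \sum_i weight i * T.
  by rewrite -mulr_suml big_split /= sumr_const card_ord.
apply: (@le_trans _ _
  (\sum_i weight i * \sum_(k < M) \sum_(n < J.+1) visit_time (sched k) T i n)).
  apply: ler_sum => i _; rewrite ler_wpM2l ?weight_ge0 //.
  exact: location_time_le_visits feas d_gt0 d_le T_ge0 TJ.
have -> : \sum_i weight i * \sum_(k < M) \sum_(n < J.+1) visit_time (sched k) T i n =
          \sum_(k < M) \sum_(n < J.+1) visit_weight (sched k) T n.
  under eq_bigr do rewrite mulr_sumr; rewrite exchange_big; apply: eq_bigr => k _.
  under eq_bigr do rewrite mulr_sumr; rewrite exchange_big; apply: eq_bigr => n _.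
  exact: sum_weight_visit_time.
apply: le_trans (ler_sum _ (fun k _ => visit_weight_sum_le J (feas.1 k) T_ge0)) _.
by rewrite sumr_const card_ord mulr_natl.
Qed.
End WeightedCoverage.

Theorem theorem4 (R : realType) (N : nat) (f c : R) (g : 'I_N -> R)
  (M : nat) (sched : 'I_M -> plan R N) :
  0 < f -> 0 <= c -> (forall i, 0 < g i) -> (forall i, 2 * g i < f) ->
  feasible f c g sched ->
  (N%:Z + Num.ceil (\sum_(i < N) (c + 2 * g i) / (f - 2 * g i)) <= M%:Z)%R.
Proof.
move=> f_gt0 c_ge0 g_gt0 g_lt_f feas.
have : N%:R + \sum_(i < N) (c + 2 * g i) / (f - 2 * g i) <= M%:R :> R.
  apply: ler_of_affine_growth (ler0n _ _) (service_slack_ge0 f_gt0 c_ge0 g_gt0 g_lt_f) _.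
  by move=> T T_ge0; have := weighted_cover_le f_gt0 c_ge0 g_gt0 g_lt_f feas T_ge0.
by move=> NS_le; rewrite addrC -lerBrDr ceil_le_int rmorphB /=; lra.
Qed.
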